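(* Let $X,Y$ be compact metric spaces and let $\mathcal G\subset\mathrm{Homeo}(X)$, $\mathcal H\subset\mathrm{Homeo}(Y)$ be finitely generated pseudogroups strongly isomorphic via a homeomorphism $\varphi:X\to Y$; let $\mathcal G_1$ be a finite generating set of $\mathcal G$ and $\mathcal H_1=\{\varphi\circ g\circ\varphi^{-1}:g\in\mathcal G_1\}$. Then $h_{top}(\mathcal G,\mathcal G_1)=h_{top}(\mathcal H,\mathcal H_1)$.
   Context: $\mathrm{Homeo}(X)$: homeomorphisms $g:D_g\to R_g$ between open subsets of $X$, composed on natural domains $D_{h\circ g}=g^{-1}(D_h)$. A pseudogroup is a subset of $\mathrm{Homeo}(X)$ containing $\mathrm{id}_X$, closed under composition, inversion, restriction to open subsets, and gluing along open covers of the domain; $\Gamma$ generates $\mathcal G$ if $\bigcup_{g\in\Gamma}(D_g\cup R_g)=X$ and $\mathcal G$ is exactly the set of $g\in\mathrm{Homeo}(X)$ locally equal near each point of $D_g$ to a finite composition of elements of $\Gamma$ and their inverses. $\mathcal G,\mathcal H$ are strongly isomorphic via $\varphi$ if for every $f\in\mathrm{Homeo}(X)$: $\varphi\circ f\circ\varphi^{-1}\in\mathcal H$ iff $f\in\mathcal G$. For a pseudogroup with finite generating set $\Gamma$ on a compact metric space $Z$: $\Gamma_n=\{g_1\circ\cdots\circ g_n:g_i\in\Gamma\}$, $\Gamma_n^x=\{g\in\Gamma_n:x\in D_g\}$; $x,y$ are $(n,\varepsilon)$-separated if some $g\in\Gamma_n^x\cap\Gamma_n^y$ has $d(g(x),g(y))\ge\varepsilon$;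 $s(n,\varepsilon)$ is the maximal cardinality of a subset of $Z$ whose distinct points are pairwise $(n,\varepsilon)$-separated; and the topological entropy is $h_{top}=\lim_{\varepsilon\to0^+}\limsup_{n\to\infty}\frac1n\log s(n,\varepsilon)$. *)

From Stdlib Require List.
From HB Require Import structures.
From mathcomp Require Import all_boot all_order all_algebra.
From mathcomp Require Import all_classical all_reals all_analysis.
Set Implicit Arguments. Unset Strict Implicit. Unset Printing Implicit Defensive.
Import Order.TTheory GRing.Theory Num.Theory.
Local Open Scope classical_set_scope.
Local Open Scope ring_scope.

Section Metric.
Variables (R : realType) (X : Type) (d : X -> X -> R).

Definition is_metric :=
  [/\ forall x y, 0 <= d x y, forall x y, d x y = 0 <-> x = y,
      forall x y, d x y = d y x & forall x y z, d x z <= d x y + d y z].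

Definition mopen (U : set X) :=
  forall x, U x -> exists2 r : R, 0 < r & forall y, d x y < r -> U y.

Definition mcompact :=
  forall (I : Type) (U : I -> set X), (forall i, mopen (U i)) ->
    (forall x, exists i, U i x) ->
    exists s : seq I, forall x, exists2 i, List.In i s & U i x.

Definition compact_metric_space := is_metric /\ mcompact.
End Metric.

Definition mcont_on (R : realType) (X Y : Type) (dX : X -> X -> R)
  (dY : Y -> Y -> R) (D : set X) (f : X -> Y) :=
  forall x, D x -> forall e : R, 0 < e -> exists2 r : R, 0 < r &
    forall y, D y -> dX x y < r -> dY (f x) (f y) < e.

(* A (candidate) element of Homeo(X): domain, range, map and its inverse.
   Values of fn outside dom (of inv outside ran) are irrelevant. *)
Record phom (X : Type) := PHom {
  dom : set X; ran : set X; fn : X -> X; inv : X -> X }.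

Section Pseudo.
Variables (R : realType) (X : Type) (d : X -> X -> R).

Definition is_homeo (g : phom X) :=
  [/\ mopen d (dom g) /\ mopen d (ran g),
      (forall x, dom g x -> ran g (fn g x) /\ inv g (fn g x) = x),
      (forall y, ran g y -> dom g (inv g y) /\ fn g (inv g y) = y),
      mcont_on d d (dom g) (fn g) & mcont_on d d (ran g) (inv g)].

Definition peq (g h : phom X) := dom g = dom h /\ {in dom g, fn g =1 fn h}.

Definition pid : phom X := PHom setT setT id id.

Definition pcomp (h g : phom X) : phom X :=
  PHom (dom g `&` (fn g) @^-1` (dom h)) (ran h `&` (inv h) @^-1` (ran g))
       (fn h \o fn g) (inv g \o inv h).

Definition pinv (g : phom X) : phom X := PHom (ran g) (dom g) (inv g) (fn g).

Definition prestr (g : phom X) (U : set X) : phom X :=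
  PHom U (fn g @` U) (fn g) (inv g).

(* G is a pseudogroup on X (a set of elements of Homeo(X); membership
   depends only on the partial map, hence closure under peq) *)
Definition is_pseudogroup (G : set (phom X)) :=
  [/\ (forall g, G g -> is_homeo g),
      (forall g h, G g -> is_homeo h -> peq g h -> G h) /\ G pid,
      (forall g h, G g -> G h -> G (pcomp h g)),
      (forall g, G g -> G (pinv g)) /\
      (forall g U, G g -> mopen d U -> U `<=` dom g -> G (prestr g U)) &
      (forall g, is_homeo g ->
         (forall x, dom g x -> exists2 U, mopen d U /\ U `<=` dom g /\ U x &
                                  G (prestr g U)) -> G g)].

Definition pcomp_word (w : seq (phom X)) : phom X := foldr pcomp pid w.

Definition generates (Gam : seq (phom X)) (G : set (phom X)) :=
  (forall x, exists2 g, List.In g Gam & dom g x \/ ran g x) /\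
  forall g, G g <->
    (is_homeo g /\
     forall x, dom g x -> exists U, exists w : seq (phom X),
       [/\ mopen d U /\ U x, U `<=` dom g,
           (forall h, List.In h w -> List.In h Gam \/
                                     exists2 k, List.In k Gam & h = pinv k),
           U `<=` dom (pcomp_word w) &
           {in U, fn g =1 fn (pcomp_word w)}]).

Definition finitely_generated (G : set (phom X)) :=
  exists Gam : seq (phom X), generates Gam G.

Definition separated (Gam : seq (phom X)) (n : nat) (eps : R) (x y : X) :=
  exists w : seq (phom X), [/\ size w = n, (forall h, List.In h w -> List.In h Gam),
    dom (pcomp_word w) x, dom (pcomp_word w) y &
    eps <= d (fn (pcomp_word w) x) (fn (pcomp_word w) y)].

Local Open Scope ereal_scope.

Definition sep_card (Gam : seq (phom X)) (n : nat) (eps : R) : \bar R :=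
  ereal_sup [set (k%:R)%:E | k in [set k : nat | exists p : 'I_k -> X,
     injective p /\ forall i j, i != j -> separated Gam n eps (p i) (p j)]].

Definition htop (Gam : seq (phom X)) : \bar R :=
  lim ((fun eps : R =>
          limn_esup (fun n : nat => ((n%:R)^-1)%:E * lne (sep_card Gam n eps)))
       @ (0 : R)^'+).
End Pseudo.

Definition pconj (X Y : Type) (phi : X -> Y) (psi : Y -> X) (g : phom X) : phom Y :=
  PHom (psi @^-1` dom g) (psi @^-1` ran g) (phi \o fn g \o psi) (phi \o inv g \o psi).

Definition is_homeomorphism (R : realType) (X Y : Type) (dX : X -> X -> R)
  (dY : Y -> Y -> R) (phi : X -> Y) (psi : Y -> X) :=
  [/\ cancel phi psi, cancel psi phi, mcont_on dX dY setT phi & mcont_on dY dX setT psi].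

Definition strongly_isomorphic (R : realType) (X Y : Type) (dX : X -> X -> R)
  (dY : Y -> Y -> R) (phi : X -> Y) (psi : Y -> X)
  (G : set (phom X)) (H : set (phom Y)) :=
  forall f : phom X, is_homeo dX f -> (H (pconj phi psi f) <-> G f).

From Pilot Require Import Defs.
From mathcomp Require Import all_boot all_order all_algebra.
From mathcomp Require Import all_classical all_reals all_analysis.
From mathcomp Require Import lra.
Set Implicit Arguments. Unset Strict Implicit. Unset Printing Implicit Defensive.
Import Order.TTheory GRing.Theory Num.Theory.
Local Open Scope classical_set_scope.
Local Open Scope ring_scope.

(* The homeomorphism phi and its inverse psi are uniformly continuous, X and Y
   being compact.  Conjugation by phi sends the words of G1 to the words of H1,
   so phi maps an (n, e)-separated set for G1 to an (n, del)-separated set for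
   H1 of the same size, where del is a modulus of uniform continuity of psi at
   scale e; symmetrically with psi.  As s(n, e) is nonincreasing in e, h_top is
   the supremum over e > 0 of limsup_n (1/n) log s(n, e), and the two
   comparisons give both inequalities. *)

Lemma le_limn_esup (R : realType) (u v : (\bar R)^nat) :
  (forall n, (u n <= v n)%E) -> (limn_esup u <= limn_esup v)%E.
Proof.
move=> uv; rewrite !limn_esup_lim; apply: lee_lim; [exact: is_cvg_esups..|].
apply: nearW => n; apply: ge_ereal_sup => _ [k kn <-].
by apply: le_trans (uv k) _; apply: ereal_sup_ubound; exists k.
Qed.

Section SeparatedSets.
Variable R : realType.
Local Open Scope ereal_scope.

Lemma sep_card_ge0 (X : Type) (d : X -> X -> R) Gam n eps :
  0 <= sep_card d Gam n eps.
Proof.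
apply: ereal_sup_ubound; exists 0%N => //.
by exists (fun i : 'I_0 => False_rect _ (notF (ltn_ord i))); split => -[].
Qed.

Lemma sep_card_le_map (X Y : Type) (dX : X -> X -> R) (dY : Y -> Y -> R)
    GamX GamY n m (eX eY : R) (f : X -> Y) :
  injective f ->
  (forall x y, Defs.separated dX GamX n eX x y ->
     Defs.separated dY GamY m eY (f x) (f y)) ->
  sep_card dX GamX n eX <= sep_card dY GamY m eY.
Proof.
move=> f_inj f_sep; apply: ereal_sup_le => _ [k [p [p_inj p_sep]] <-].
exists k => //; exists (f \o p); split; first exact: inj_comp.
by move=> i j ij; apply: f_sep; apply: p_sep.
Qed.

Lemma separated_le (X : Type) (d : X -> X -> R) Gam n (e1 e2 : R) x y :
  (e1 <= e2)%R ->
  Defs.separated d Gam n e2 x y -> Defs.separated d Gam n e1 x y.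
Proof.
move=> e12 [w [w_size w_Gam x_dom y_dom sep]].
by exists w; split => //; apply: le_trans sep.
Qed.

Lemma le_sep_card (X : Type) (d : X -> X -> R) Gam n (e1 e2 : R) :
  (e1 <= e2)%R -> sep_card d Gam n e2 <= sep_card d Gam n e1.
Proof.
by move=> e12; apply: sep_card_le_map (@inj_id _) _ => x y; apply: separated_le.
Qed.

Definition sep_growth (X : Type) (d : X -> X -> R) Gam (eps : R) :=
  limn_esup (fun n : nat => ((n%:R)^-1)%:E * lne (sep_card d Gam n eps)).

Lemma le_sep_growth (X Y : Type) (dX : X -> X -> R) (dY : Y -> Y -> R)
    GamX GamY (eX eY : R) :
  (forall n, sep_card dX GamX n eX <= sep_card dY GamY n eY) ->
  sep_growth dX GamX eX <= sep_growth dY GamY eY.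
Proof.
move=> le_card; apply: le_limn_esup => n.
rewrite lee_wpmul2l ?lee_fin ?invr_ge0 // lee_lne ?le_card //;
  by rewrite in_itv /= sep_card_ge0 leey.
Qed.

Lemma htop_sup (X : Type) (d : X -> X -> R) Gam :
  htop d Gam = ereal_sup (sep_growth d Gam @` [set e | (0 < e)%R]).
Proof.
rewrite -set_itvoy; apply: (cvg_lim (@ereal_hausdorff R)).
apply: nonincreasing_at_right_cvge => //.
by move=> e1 e2 _ _ e12; apply: le_sep_growth => n; apply: le_sep_card.
Qed.

Lemma htop_le (X Y : Type) (dX : X -> X -> R) (dY : Y -> Y -> R) GamX GamY :
  (forall eps : R, (0 < eps)%R -> exists2 del : R, (0 < del)%R &
      forall n, sep_card dX GamX n eps <= sep_card dY GamY n del) ->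
  htop dX GamX <= htop dY GamY.
Proof.
move=> card_le; rewrite !htop_sup; apply: ge_ereal_sup => _ [e e_pos <-].
have [del del_pos le_card] := card_le e e_pos.
apply: le_trans (le_sep_growth le_card) _.
by apply: ereal_sup_ubound; exists del.
Qed.

End SeparatedSets.

Section UniformContinuity.
Variables (R : realType) (X : Type) (d : X -> X -> R).

Lemma mopen_ball :
  is_metric d -> forall x (r : R), mopen d (fun y => d x y < r).
Proof.
move=> [_ _ _ d_tri] x r y xy; exists (r - d x y); first by rewrite subr_gt0.
by move=> z yz; apply: le_lt_trans (d_tri x y z) _; rewrite -ltrBrDl.
Qed.

Lemma seq_pos_lower_bound (T : Type) (f : T -> R) (s : seq T) :
  (forall t, 0 < f t) -> exists2 m, 0 < m & forall t, List.In t s -> m <= f t.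
Proof.
move=> f_pos; elim: s => [|t s [m m_pos m_le]]; first by exists 1.
exists (Num.min (f t) m); first by rewrite lt_min f_pos.
by move=> u [<-|us]; rewrite ge_min ?lexx // m_le ?orbT.
Qed.

Lemma mcompact_uniform_cont (Y : Type) (dY : Y -> Y -> R) (f : X -> Y) :
  compact_metric_space d -> is_metric dY -> mcont_on d dY setT f ->
  forall e : R, 0 < e ->
  exists2 del : R, 0 < del & forall a b, d a b < del -> dY (f a) (f b) < e.
Proof.
move=> [d_metric d_compact] [_ _ dY_sym dY_tri] f_cont e e_pos.
have [_ d_eq0 _ d_tri] := d_metric.
have e2_pos : 0 < e / 2 by lra.
have /choice [r r_spec] : forall x, exists r : R,
    0 < r /\ forall y, d x y < r -> dY (f x) (f y) < e / 2.
  move=> x; have [r r_pos near_x] := f_cont x I _ e2_pos.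
  by exists r; split => // y; apply: near_x.
have r_pos x : 0 < r x := (r_spec x).1.
have r_cont x y : d x y < r x -> dY (f x) (f y) < e / 2 := (r_spec x).2 y.
have ball_cover y : exists x, d x y < r x / 2.
  by exists y; rewrite (proj2 (d_eq0 y y) erefl) divr_gt0.
have [s cover] := d_compact X (fun x y => d x y < r x / 2)
  (fun x => mopen_ball (x := x) (r := r x / 2) d_metric) ball_cover.
(* del is a Lebesgue number of the cover by the balls B(x, r x / 2) *)
have [del del_pos del_le] :=
  seq_pos_lower_bound s (fun x => divr_gt0 (r_pos x) (ltr0Sn _ 1)).
exists del => // a b ab; have [x xs xa] := cover a.
have xb : d x b < r x by have := d_tri x a b; have := del_le x xs; lra.
have xa' : d x a < r x by have := r_pos x; lra.
have := r_cont x a xa'; have := r_cont x b xb; have := dY_tri (f a) (f x) (f b).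
by rewrite [dY (f a) (f x)]dY_sym; lra.
Qed.

End UniformContinuity.

Section Conjugation.
Variables (X Y : Type) (phi : X -> Y) (psi : Y -> X).
Hypotheses (phiK : cancel phi psi) (psiK : cancel psi phi).

Lemma pconj_id : pconj phi psi (pid X) = pid Y.
Proof. by congr PHom; apply/funext => y //=; rewrite psiK. Qed.

Lemma pconj_comp (h g : phom X) :
  pconj phi psi (Defs.pcomp h g) =
  Defs.pcomp (pconj phi psi h) (pconj phi psi g).
Proof. by congr PHom; apply/funext => y /=; rewrite phiK. Qed.

Lemma pconj_word (w : seq (phom X)) :
  pcomp_word (map (pconj phi psi) w) = pconj phi psi (pcomp_word w).
Proof. by elim: w => [|g w IHw] /=; rewrite ?pconj_id // pconj_comp IHw. Qed.

Lemma pconjK : cancel (pconj phi psi) (pconj psi phi).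
Proof.
by case=> D Rg f g; rewrite /pconj /=; congr PHom; apply/funext => x /=;
  rewrite !phiK.
Qed.

Lemma separated_pconj (R : realType) (dX : X -> X -> R) (dY : Y -> Y -> R)
    Gam n (e del : R) x y :
  (forall a b, dY a b < del -> dX (psi a) (psi b) < e) ->
  Defs.separated dX Gam n e x y ->
  Defs.separated dY (map (pconj phi psi) Gam) n del (phi x) (phi y).
Proof.
move=> psi_unif [w [w_size w_Gam x_dom y_dom sep]].
exists (map (pconj phi psi) w); rewrite pconj_word /= !phiK; split.
- by rewrite size_map.
- by move=> _ /List.in_map_iff [g [<- gw]]; apply/List.in_map/w_Gam.
- exact: x_dom.
- exact: y_dom.
- by rewrite leNgt; apply/negP => /psi_unif; rewrite !phiK ltNge sep.
Qed.

Lemma sep_card_pconj_le (R : realType) (dX : X -> X -> R) (dY : Y -> Y -> R)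
    Gam n (e del : R) :
  (forall a b, dY a b < del -> dX (psi a) (psi b) < e) ->
  (sep_card dX Gam n e <= sep_card dY (map (pconj phi psi) Gam) n del)%E.
Proof.
move=> psi_unif; apply: sep_card_le_map (can_inj phiK) _ => x y.
exact: separated_pconj.
Qed.

End Conjugation.

Lemma sep_card_pconj_ge (R : realType) (X Y : Type) (dX : X -> X -> R)
    (dY : Y -> Y -> R) (phi : X -> Y) (psi : Y -> X) Gam n (e del : R) :
  cancel phi psi -> cancel psi phi ->
  (forall a b, dX a b < del -> dY (phi a) (phi b) < e) ->
  (sep_card dY (map (pconj phi psi) Gam) n e <= sep_card dX Gam n del)%E.
Proof.
move=> phiK psiK phi_unif.
have := sep_card_pconj_le psiK phiK (map (pconj phi psi) Gam) n phi_unif.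
by rewrite (mapK (pconjK phiK)).
Qed.

Theorem mainTheorem15 (R : realType) (X Y : Type)
  (dX : X -> X -> R) (dY : Y -> Y -> R)
  (G : set (phom X)) (H : set (phom Y)) (phi : X -> Y) (psi : Y -> X)
  (G1 : seq (phom X)) :
  compact_metric_space dX -> compact_metric_space dY ->
  is_pseudogroup dX G -> is_pseudogroup dY H ->
  finitely_generated dX G -> finitely_generated dY H ->
  is_homeomorphism dX dY phi psi ->
  strongly_isomorphic dX dY phi psi G H ->
  generates dX G1 G ->
  htop dX G1 = htop dY (map (pconj phi psi) G1).
Proof.
move=> X_cpt Y_cpt _ _ _ _ [phiK psiK phi_cont psi_cont] _ _.
apply: le_anti; apply/andP; split; apply: htop_le => e e_pos.
- have [del del_pos psi_unif] :=
    mcompact_uniform_cont Y_cpt (proj1 X_cpt) psi_cont e_pos.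
  by exists del => [//|n]; apply: sep_card_pconj_le.
- have [del del_pos phi_unif] :=
    mcompact_uniform_cont X_cpt (proj1 Y_cpt) phi_cont e_pos.
  by exists del => [//|n]; apply: sep_card_pconj_ge.
Qed.
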